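(* Let $S$ be a set and $s,s':I_m\to S$ be mirrored, and assume $(m_1,m_2)$ is a coincidence of $(s,s')$, with $m'=m_1+m_2<m$. Define $s_0,s_0':I_{m-m'}\to S$ by $s_0(j)=s(j+m_1)$ and $s_0'(j)=s'(j+m_1)$ (the restrictions of $s,s'$ to $I_m'=\{m_1+1,\ldots,m-m_2\}$, reindexed). Then $s_0$ and $s_0'$ are mirrored (as sequences of length $m-m'$).
   Context: $\mathcal{S}_k$ is the group of bijections of $I_k=\{1,\ldots,k\}$, with $\sigma\circ\tau$ meaning apply $\tau$ first. $\mathscr{T}_k=\{\sigma\in\mathcal{S}_k \mid \exists t:\ \sigma(1)>\cdots>\sigma(t)=1,\ \sigma(t)<\sigma(t+1)<\cdots<\sigma(k)\}$. $\mathcal{S}_k$ acts on sequences $s:I_k\to S$ by $\sigma s=s\circ\sigma^{-1}$. Two sequences $s,s':I_k\to S$ are mirrored if for every $\sigma\in\mathscr{T}_k$ there is $\sigma'\in\mathscr{T}_k$ with $\sigma s=\sigma's'$, and for every $\tau'\in\mathscr{T}_k$ there is $\tau\in\mathscr{T}_k$ with $\tau's'=\tau s$. For $s,s':I_m\to S$ and $A=s(1)$, a coincidence of $(s,s')$ is a pair $(m_1,m_2)$ of integers with $m_1>0$, $m_2\ge 0$, $m_1+m_2<m$, such that $s(i)=s'(i)=A$ for all $i\in\{1,\ldots,m_1\}\cup\{m-m_2+1,\ldots,m\}$, and $s(m_1+1)\ne A$, $s'(m_1+1)\ne A$, $s(m-m_2)\ne A$, $s'(m-m_2)\ne A$. 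*)

(* Indices are 0-based: position i of I_k = {1..k} is the
   ordinal i-1 : 'I_k. *)
From mathcomp Require Import all_boot all_fingroup.
Set Implicit Arguments. Unset Strict Implicit. Unset Printing Implicit Defensive.

Definition inT (k : nat) (sigma : 'S_k) : Prop :=
  exists t : 'I_k,
    (sigma t : nat) = 0 /\
    (forall i j : 'I_k, i < j -> j <= t -> sigma j < sigma i) /\
    (forall i j : 'I_k, t <= i -> i < j -> sigma i < sigma j).

Definition act_seq (S : Type) (k : nat) (sigma : 'S_k) (s : 'I_k -> S) : 'I_k -> S :=
  fun i => s ((sigma^-1)%g i).

Definition mirrored (S : Type) (k : nat) (s s' : 'I_k -> S) : Prop :=
  (forall sigma : 'S_k, inT sigma ->
     exists2 sigma' : 'S_k, inT sigma' & forall i, act_seq sigma s i = act_seq sigma' s' i) /\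
  (forall tau' : 'S_k, inT tau' ->
     exists2 tau : 'S_k, inT tau & forall i, act_seq tau' s' i = act_seq tau s i).

(* (m1, m2) is a coincidence of (s, s'), with A = s(1) (the 0-th ordinal). *)
Definition coincidence (S : Type) (m : nat) (s s' : 'I_m -> S) (m1 m2 : nat) : Prop :=
  0 < m1 /\ m1 + m2 < m /\
  forall i0 : 'I_m, (i0 : nat) = 0 ->
    (forall i : 'I_m, (i < m1) || (m - m2 <= i) -> s i = s i0 /\ s' i = s i0) /\
    (forall i : 'I_m, (i : nat) = m1 -> s i <> s i0 /\ s' i <> s i0) /\
    (forall i : 'I_m, (i : nat) = (m - m2).-1 -> s i <> s i0 /\ s' i <> s i0).

Lemma restr_lt (m m1 m2 : nat) (j : 'I_(m - (m1 + m2))) : j + m1 < m.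
Proof.
case: j => j /= Hj.
have H : j < m - m1 by apply: leq_trans Hj _; rewrite subnDA leq_subr.
by rewrite addnC -ltn_subRL.
Qed.

Definition restr (S : Type) (m m1 m2 : nat) (s : 'I_m -> S) : 'I_(m - (m1 + m2)) -> S :=
  fun j => s (Ordinal (restr_lt j)).

From mathcomp Require Import all_boot all_fingroup.
From mathcomp Require Import zify.
Set Implicit Arguments. Unset Strict Implicit. Unset Printing Implicit Defensive.

(* Write k for the length of the middle block and A for the common value of
   s and s' outside it.  A V-shaped sigma0 of I_k extends to a V-shaped
   permutation of I_m sending the middle block onto the first k positions,
   the front block decreasingly just above them and fixing the back block;
   it rearranges s into sigma0 s_0 followed by A's.  A mirror partner sigma'
   for s' must send both ends of the middle block below k, because s' differs
   from A there, and since the sublevel sets of a V-shaped permutation are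
   intervals, sigma' sends the whole middle block onto the first k positions.
   Its restriction to the middle block is a V-shaped partner of sigma0. *)

Definition mirrors_into (S : Type) (k : nat) (s s' : 'I_k -> S) : Prop :=
  forall sigma : 'S_k, inT sigma ->
    exists2 sigma' : 'S_k, inT sigma' & forall i, act_seq sigma s i = act_seq sigma' s' i.

Lemma mirroredE (S : Type) (k : nat) (s s' : 'I_k -> S) :
  mirrored s s' <-> mirrors_into s s' /\ mirrors_into s' s.
Proof. by []. Qed.

Lemma inT_le_maxn (n : nat) (sigma : 'S_n) (i l j : 'I_n) :
  inT sigma -> i <= l <= j -> sigma l <= maxn (sigma i) (sigma j).
Proof.
move=> [t [_ [dec inc]]] /andP[il lj].
have [lt|tl] := leqP l t.
  rewrite leq_max; apply/orP; left.
  by case: (ltngtP i l) il => // [/dec/(_ lt)/ltnW|/val_inj->].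
rewrite leq_max; apply/orP; right.
by case: (ltngtP l j) lj => // [/(inc _ _ (ltnW tl))/ltnW|/val_inj->].
Qed.

Section MiddleBlock.
Variables m m1 m2 : nat.
Hypothesis m12_le : m1 + m2 <= m.
Local Notation k := (m - (m1 + m2)).

Definition mid (j : 'I_k) : 'I_m := Ordinal (@restr_lt m m1 m2 j).

Lemma restrE (S : Type) (s : 'I_m -> S) (j : 'I_k) : @restr S m m1 m2 s j = s (mid j).
Proof. by []. Qed.

Lemma mid_inj : injective mid.
Proof. by move=> i j [/addIn/val_inj]. Qed.

Lemma midP (i : 'I_m) : ~~ ((i < m1) || (m - m2 <= i)) -> {j | i = mid j}.
Proof.
rewrite negb_or -!ltnNge => /andP[i_ge i_lt].
have j_lt : i - m1 < k by lia.
by exists (Ordinal j_lt); apply/val_inj => /=; lia.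
Qed.

Section Extension.
Variable sigma0 : 'S_k.

Definition ext_val (i : 'I_m) : nat :=
  if i < m1 then k + (m1 - i.+1)
  else if insub (i - m1) : option 'I_k is Some j then sigma0 j else i.

Variant ext_spec (i : 'I_m) : nat -> Type :=
  | ExtFront of i < m1 : ext_spec i (k + (m1 - i.+1))
  | ExtMid j of i = mid j : ext_spec i (sigma0 j)
  | ExtBack of m1 + k <= i : ext_spec i i.

Lemma extP (i : 'I_m) : ext_spec i (ext_val i).
Proof.
rewrite /ext_val; have [i_lt|i_ge] := ltnP i m1; first exact: ExtFront.
case: insubP => [j _ j_val|]; last by rewrite -leqNgt => ?; apply: ExtBack; lia.
by apply: ExtMid; apply/val_inj; rewrite /= j_val; lia.
Qed.

Lemma ext_val_lt (i : 'I_m) : ext_val i < m.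
Proof.
case: extP => [? | j _ | _]; last exact: ltn_ord.
  by have := ltn_ord i; lia.
exact: leq_trans (ltn_ord _) (leq_subr _ _).
Qed.

Lemma ext_val_inj : injective (fun i => Ordinal (ext_val_lt i)).
Proof.
move=> i i' []; case: (extP i) => [hi|j ->|hi]; case: (extP i') => [hi'|j' ->|hi'] //=.
all: have := ltn_ord i; have := ltn_ord i'.
all: try (have := ltn_ord (sigma0 j)); try (have := ltn_ord (sigma0 j')).
all: try (by move=> *; apply/val_inj => /=; lia).
by move=> _ _ _ _ /val_inj/perm_inj ->.
Qed.

Definition ext_perm : 'S_m := perm ext_val_inj.

Lemma ext_permE (i : 'I_m) : ext_perm i = ext_val i :> nat.
Proof. by rewrite permE. Qed.

Lemma ext_perm_mid (j : 'I_k) : ext_perm (mid j) = sigma0 j :> nat.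
Proof.
have := ltn_ord j; rewrite ext_permE.
by case: extP => [|j' /mid_inj <-|] //=; lia.
Qed.

Lemma ext_permV_out (p : 'I_m) :
  k <= p -> let i := (ext_perm^-1)%g p in (i < m1) || (m - m2 <= i).
Proof.
move=> kp /=; apply/negPn/negP => /midP[j pj].
by move: kp; rewrite -(permKV ext_perm p) pj ext_perm_mid leqNgt ltn_ord.
Qed.

Lemma ext_perm_inT : inT sigma0 -> inT ext_perm.
Proof.
move=> [t [t0 [dec inc]]]; exists (mid t); split; first by rewrite ext_perm_mid.
have t_lt := ltn_ord t.
split=> i j; rewrite !ext_permE.
all: case: (extP i) => [hi|a ->|hi]; case: (extP j) => [hj|b ->|hj] /=.
all: try (have := ltn_ord b); try (have := ltn_ord (sigma0 a)); try (have := ltn_ord (sigma0 b)).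
all: try lia.
- by move=> *; apply: dec; lia.
- by move=> *; apply: inc; lia.
Qed.

End Extension.

Section Restriction.
Variable sigma : 'S_m.
Hypothesis sigma_mid : forall j : 'I_k, sigma (mid j) < k.

Definition perm_mid_fun (j : 'I_k) : 'I_k := Ordinal (sigma_mid j).

Lemma perm_mid_inj : injective perm_mid_fun.
Proof. by move=> i j [/val_inj/perm_inj/mid_inj]. Qed.

Definition perm_mid : 'S_k := perm perm_mid_inj.

Lemma perm_midE (j : 'I_k) : perm_mid j = sigma (mid j) :> nat.
Proof. by rewrite permE. Qed.

Lemma perm_mid_inT : 0 < k -> inT sigma -> inT perm_mid.
Proof.
move=> k_gt0 [t [t0 [dec inc]]].
pose t' := (perm_mid^-1)%g (Ordinal k_gt0).
have mid_t' : mid t' = t.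
  by apply: (@perm_inj _ sigma); apply/val_inj; rewrite /= t0 -perm_midE permKV.
exists t'; split; first by rewrite permKV.
split=> i j ij jt; rewrite !perm_midE; [apply: dec | apply: inc].
all: by rewrite -?mid_t' /= ?ltn_add2r ?leq_add2r.
Qed.

End Restriction.

Lemma permV_mid (sigma : 'S_m) (tau : 'S_k) :
  (forall j, sigma (mid j) = tau j :> nat) ->
  forall j : 'I_k, (sigma^-1)%g (widen_ord (leq_subr _ _) j) = mid ((tau^-1)%g j).
Proof.
move=> sigma_tau j; apply: (@perm_inj _ sigma); apply/val_inj.
by rewrite permKV /= sigma_tau permKV.
Qed.

Lemma inT_mid_lt (sigma : 'S_m) (c : nat) : inT sigma ->
    (forall j : 'I_k, j = 0 :> nat \/ j = k.-1 :> nat -> sigma (mid j) < c) ->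
  forall j : 'I_k, sigma (mid j) < c.
Proof.
move=> sigmaT sigma_ends j; have j_lt := ltn_ord j.
have k_gt0 : 0 < k by lia.
have last_lt : k.-1 < k by lia.
have j_between : mid (Ordinal k_gt0) <= mid j <= mid (Ordinal last_lt).
  by rewrite /= leq_add2r; lia.
apply: leq_ltn_trans (inT_le_maxn sigmaT j_between) _.
by rewrite gtn_max; apply/andP; split; apply: sigma_ends; [left | right].
Qed.

Lemma mirrors_into_restr (S : Type) (s s' : 'I_m -> S) (A : S) :
  (forall i : 'I_m, (i < m1) || (m - m2 <= i) -> s i = A) ->
  (forall i : 'I_m, (i : nat) = m1 \/ (i : nat) = (m - m2).-1 -> s' i <> A) ->
  mirrors_into s s' -> mirrors_into (@restr S m m1 m2 s) (@restr S m m1 m2 s').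
Proof.
move=> s_out s'_ends mir sigma0 sigma0T.
have k_gt0 : 0 < k by case: sigma0T => t _; exact: leq_ltn_trans (leq0n t) (ltn_ord t).
have [sigma sigmaT act_eq] := mir _ (ext_perm_inT sigma0T).
have s'_out (i : 'I_m) : k <= sigma i -> s' i = A.
  move=> ki; have := act_eq (sigma i); rewrite /act_seq permK => <-.
  exact/s_out/ext_permV_out.
have sigma_ends (j : 'I_k) : j = 0 :> nat \/ j = k.-1 :> nat -> sigma (mid j) < k.
  by move=> j_end; rewrite ltnNge; apply/negP => /s'_out; apply: s'_ends => /=; lia.
have sigma_mid := inT_mid_lt sigmaT sigma_ends.
exists (perm_mid sigma_mid); first exact: perm_mid_inT.
move=> j; rewrite /act_seq !restrE.
rewrite -(permV_mid (ext_perm_mid sigma0)) -(permV_mid (fun j => esym (perm_midE sigma_mid j))).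
exact: act_eq.
Qed.

End MiddleBlock.

Theorem mainTheorem13 (S : Type) (m : nat) (s s' : 'I_m -> S) (m1 m2 : nat) :
  mirrored s s' -> coincidence s s' m1 m2 -> m1 + m2 < m ->
  mirrored (@restr S m m1 m2 s) (@restr S m m1 m2 s').
Proof.
move=> /mirroredE[mir mir'] [_ [_ coinc]] m12_lt.
have m_gt0 : 0 < m by lia.
have [s_out [s_m1 s_last]] := coinc (Ordinal m_gt0) erefl.
have ends (i : 'I_m) : (i : nat) = m1 \/ (i : nat) = (m - m2).-1 ->
    s i <> s (Ordinal m_gt0) /\ s' i <> s (Ordinal m_gt0).
  by case=> [/s_m1 | /s_last].
apply/mirroredE; split; apply: (mirrors_into_restr (ltnW m12_lt) (A := s (Ordinal m_gt0))) => // i.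
- by move/s_out => [].
- by move/ends => [].
- by move/s_out => [].
- by move/ends => [].
Qed.
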